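(* Let $\mathcal I\subseteq\mathbb R$, let $q:\mathcal I\to(0,\infty)$ be a target FDR curve, and for each $i\in[m]$ let $X_i\in\mathcal X_i$ be a test statistic and $p_i:\mathcal X_i\times\mathcal I\to[0,1]$ a p-value function. Assume $X_1,\dots,X_m$ are independent and that $p_i(X_i;c)$ is a valid p-value for $H_{i,c}:\theta_i\ge c$ for all $i\in[m]$, $c\in\mathcal I$. Define $P_{i,\sup}=\sup_{c\in\mathcal I}p_i(X_i;c)/q(c)$, and let $\mathcal S^T$ be the output of the iteration $\mathcal S^1=[m]$, $\mathcal S^{t+1}=\{i\in\mathcal S^t:P_{i,\sup}\le|\mathcal S^t|/m\}$, stopped at the first $T$ with $\mathcal S^{T+1}=\mathcal S^T$ (equivalently, the Benjamini–Hochberg procedure at level 1 applied to $P_{1,\sup},\dots,P_{m,\sup}$). Then $$\sup_{c\in\mathcal I}\frac{\mathrm{FDR}(c)}{q(c)}\le\mathbb E\left[\sup_{c\in\mathcal I}\frac{\sum_{i=1}^m\mathbf 1_{\{H_{i,c}\text{ true}\}}\mathbf 1_{\{i\in\mathcal S^T\}}}{q(c)(1\vee|\mathcal S^T|)}\right]\le1.$$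
   Context: $\theta_1,\dots,\theta_m$ are unknown real parameters. A p-value $P$ is valid for $H_{i,c}$ if $\mathbb P(P\le u)\le u$ for all $u\in[0,1]$ whenever $H_{i,c}$ is true. For $c\in\mathcal I$, $\mathrm{FDR}(c)=\mathbb E\big[\sum_{i=1}^m\mathbf 1_{\{H_{i,c}\text{ true}\}}\mathbf 1_{\{i\in\mathcal S^T\}}/(1\vee|\mathcal S^T|)\big]$. *)

From HB Require Import structures.
From mathcomp Require Import all_boot all_order all_algebra.
From mathcomp Require Import all_classical all_reals all_analysis measurable_realfun.
Set Implicit Arguments. Unset Strict Implicit. Unset Printing Implicit Defensive.
Import Order.TTheory GRing.Theory Num.Theory.
Local Open Scope classical_set_scope.
Local Open Scope ring_scope.

(* Mutual independence of the family of random elements X_i : Omega -> T_i,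
   i in 'I_m : product rule for every choice of measurable sets A_i
   (taking A_j = setT recovers the rule for every subfamily). *)
Definition mutually_independent (R : realType) (dO : measure_display)
  (Omega : measurableType dO) (P : probability Omega R) (m : nat)
  (d : 'I_m -> measure_display) (T : forall i, measurableType (d i))
  (X : forall i, Omega -> T i) : Prop :=
  forall A : forall i, set (T i), (forall i, measurable (A i)) ->
    P (\bigcap_(i in [set: 'I_m]) (X i @^-1` A i)) =
    (\prod_(i < m) P (X i @^-1` A i))%E.

Definition Psup (R : realType) (I : set R) (q : R -> R) (X : Type)
  (p : X -> R -> R) (x : X) : \bar R :=
  ereal_sup [set ((p x c) / q c)%:E | c in I].

Definition bh_step (R : realType) (m : nat) (P : 'I_m -> \bar R)
  (S : {set 'I_m}) : {set 'I_m} :=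
  [set i in S | (P i <= (#|S|%:R / m%:R)%:E)%E].

(* The sets decrease and
   any strict decrease removes an element, so after m steps the iteration has
   reached its first fixed point S^T (and stays there). *)
Definition bh_output (R : realType) (m : nat) (P : 'I_m -> \bar R) : {set 'I_m} :=
  iter m (bh_step P) (finset.setTfor 'I_m).

Definition fdp (R : realType) (m : nat) (theta : 'I_m -> R) (c : R)
  (S : {set 'I_m}) : R :=
  (\sum_(i < m) (((c <= theta i)%R : bool)%:R * ((i \in S) : bool)%:R)) / Num.max 1 (#|S|%:R).

From HB Require Import structures.
From mathcomp Require Import all_boot all_order all_algebra.
From mathcomp Require Import all_classical all_reals all_analysis measurable_realfun.
From mathcomp Require Import zify.
Set Implicit Arguments. Unset Strict Implicit. Unset Printing Implicit Defensive.
Import Order.TTheory GRing.Theory Num.Theory.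
Local Open Scope ring_scope.

(** Only the level [l_i] of each statistic matters, the least [k <= m] with
    [P_{i,sup} <= k/m]: the BH output is [{i | l_i <= s}], where [s] is the
    largest [r] with [#{j | l_j <= r} >= r].  Resetting [l_i] to [0] yields a
    leave-one-out size [s_i], a function of the other levels only, such that [i]
    is selected iff [l_i <= s_i], and then [s = s_i].  Hence
    [E[1{i selected}/s] = E[F_i(s_i)/s_i]] with [F_i] the distribution function
    of [l_i], independent of [s_i]; when [H_{i,c}] is true,
    [F_i(k) <= P(p_i(X_i;c) <= q(c) k/m) <= q(c) k/m], so this is at most
    [q(c)/m].  Bounding [FDP(c)/q(c)] by [sum_i w_i 1{i selected}/s], with [w_i]
    the supremum of [1/q(c)] over the [c] for which [H_{i,c}] is true, gives the
    bound [1] after summing over [i].  All expectations are finite sums over level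
    vectors, which also yields the first inequality. *)

Lemma iter_subset_fixpoint (T : finType) (f : {set T} -> {set T}) :
  (forall S, f S \subset S) -> f (iter #|T| f [set: T]) = iter #|T| f [set: T].
Proof.
move=> fS; pose S t := iter t f [set: T].
have shrink t : f (S t) = S t \/ (#|S t| + t <= #|T|)%N.
  elim: t => [|t [fixed|IH]]; first by right; rewrite addn0 cardsT.
    by left; rewrite /S /= -/(S t) fixed fixed.
  have [fixed|moved] := eqVneq (f (S t)) (S t); first by left; rewrite /S /= -/(S t) fixed fixed.
  right; have : (#|f (S t)| < #|S t|)%N by rewrite proper_card // finset.properEneq moved fS.
  by rewrite /S /= -/(S t) addnS => lt_card; apply: leq_trans IH; rewrite ltn_add2r.
case: (shrink #|T|) => // small.
have S0 : S #|T| = finset.set0 by apply/eqP; rewrite -cards_eq0; lia.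
by rewrite -/(S _) S0; apply/eqP; rewrite -finset.subset0 -S0.
Qed.

Definition fdp_term (R : realType) (m : nat) (S : {set 'I_m}) (i : 'I_m) : R :=
  ((i \in S) : bool)%:R / Num.max 1 (#|S|%:R).

Lemma fdp_term_ge0 (R : realType) (m : nat) (S : {set 'I_m}) i : 0 <= fdp_term R S i.
Proof. by rewrite divr_ge0 // (le_trans ler01) // le_max lexx. Qed.

Lemma fdpE (R : realType) (m : nat) (theta : 'I_m -> R) c (S : {set 'I_m}) :
  fdp theta c S = \sum_(i < m) ((c <= theta i)%R : bool)%:R * fdp_term R S i.
Proof. by rewrite /fdp big_distrl; apply: eq_bigr => i _; rewrite mulrA. Qed.

Lemma fdp_ge0 (R : realType) (m : nat) (theta : 'I_m -> R) c (S : {set 'I_m}) :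
  0 <= fdp theta c S.
Proof. by rewrite fdpE sumr_ge0 // => i _; rewrite mulr_ge0 ?fdp_term_ge0. Qed.

Section BHLevels.
Variables m n : nat.
Implicit Types (l : 'I_m -> 'I_n) (S : {set 'I_m}).

Definition bh_lvl_step l S := [set j in S | (l j <= #|S|)%N].
Definition bh_lvl l := iter m (bh_lvl_step l) [set: 'I_m].
Definition lvl_count l r := #|[set j | (l j <= r)%N]|.

Definition bh_lvl_inv l S :=
  [set j | (l j <= #|S|)%N] \subset S /\ forall r, (#|S| < r)%N -> (lvl_count l r < r)%N.

Lemma lvl_count_le l r r' : (r <= r')%N -> (lvl_count l r <= lvl_count l r')%N.
Proof.
move=> le_rr'; apply/subset_leq_card/fintype.subsetP => j; rewrite !inE => le_jr.
exact: leq_trans le_jr le_rr'.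
Qed.

Lemma bh_lvl_stepE l S :
  [set j | (l j <= #|S|)%N] \subset S -> bh_lvl_step l S = [set j | (l j <= #|S|)%N].
Proof.
move=> /fintype.subsetP sub; apply/finset.setP => j; rewrite !inE andb_idl // => le_j.
by apply: sub; rewrite inE.
Qed.

Lemma bh_lvl_step_sub l S : bh_lvl_step l S \subset S.
Proof. by apply/fintype.subsetP => j; rewrite inE => /andP[]. Qed.

Lemma bh_lvl_step_inv l S : bh_lvl_inv l S -> bh_lvl_inv l (bh_lvl_step l S).
Proof.
move=> [sub gt]; have stepE := bh_lvl_stepE sub.
have le_card : (#|bh_lvl_step l S| <= #|S|)%N.
  exact/subset_leq_card/bh_lvl_step_sub.
split.
  apply/fintype.subsetP => j; rewrite inE => le_j.
  by rewrite stepE inE (leq_trans le_j le_card).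
move=> r lt_r; have [/gt //|le_rS] := ltnP #|S| r.
apply: leq_ltn_trans (lvl_count_le l le_rS) _.
by rewrite /lvl_count -stepE.
Qed.

Lemma bh_lvl_fixpoint l : bh_lvl_step l (bh_lvl l) = bh_lvl l.
Proof.
by have := iter_subset_fixpoint (bh_lvl_step_sub l); rewrite card_ord.
Qed.

Lemma bh_lvl_invariant l : bh_lvl_inv l (bh_lvl l).
Proof.
suff inv t : bh_lvl_inv l (iter t (bh_lvl_step l) [set: 'I_m]) by exact: inv.
elim: t => [|t IH] /=; last exact: bh_lvl_step_inv.
split; first exact: finset.subsetT.
move=> r; rewrite cardsT card_ord; apply: leq_ltn_trans.
by rewrite -[X in (_ <= X)%N]card_ord max_card.
Qed.

Lemma bh_lvlE l : bh_lvl l = [set j | (l j <= #|bh_lvl l|)%N].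
Proof. by rewrite -{1}bh_lvl_fixpoint bh_lvl_stepE //; case: (bh_lvl_invariant l). Qed.

Lemma lvl_count_card_bh_lvl l : lvl_count l #|bh_lvl l| = #|bh_lvl l|.
Proof. by rewrite /lvl_count -bh_lvlE. Qed.

Lemma lvl_count_gt_card l r : (#|bh_lvl l| < r)%N -> (lvl_count l r < r)%N.
Proof. by case: (bh_lvl_invariant l) => _; apply. Qed.

Lemma card_bh_lvl_eq l l' k :
  (forall r, (k <= r)%N -> lvl_count l r = lvl_count l' r) ->
  (k <= #|bh_lvl l|)%N -> #|bh_lvl l| = #|bh_lvl l'|.
Proof.
move=> agree le_k; apply/eqP; rewrite eqn_leq; apply/andP; split.
  rewrite leqNgt; apply/negP => /lvl_count_gt_card.
  by rewrite -agree // lvl_count_card_bh_lvl ltnn.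
rewrite leqNgt; apply/negP => lt_card; have := lvl_count_gt_card lt_card.
by rewrite agree ?lvl_count_card_bh_lvl ?ltnn // (leq_trans le_k (ltnW lt_card)).
Qed.

Section LeaveOneOut.
Variables (l l' : 'I_m -> 'I_n) (i : 'I_m).
Hypotheses (l'i0 : l' i = 0%N :> nat) (l'E : forall j, j != i -> l' j = l j).

Lemma lvl_count_loo r : (l i <= r)%N -> lvl_count l r = lvl_count l' r.
Proof.
move=> le_ir; apply: eq_card => j; rewrite !inE.
by have [->|/l'E ->] := eqVneq j i; rewrite ?l'i0 ?le_ir.
Qed.

Lemma mem_bh_lvl_loo : (i \in bh_lvl l) = (l i <= #|bh_lvl l'|)%N.
Proof.
rewrite {1}bh_lvlE inE; apply/idP/idP => le_i.
  by rewrite -(card_bh_lvl_eq lvl_count_loo le_i).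
have agree r (le_ir : (l i <= r)%N) := esym (lvl_count_loo le_ir).
by rewrite -(card_bh_lvl_eq agree le_i).
Qed.

Lemma card_bh_lvl_loo : i \in bh_lvl l -> #|bh_lvl l| = #|bh_lvl l'|.
Proof. by rewrite {1}bh_lvlE inE => /(card_bh_lvl_eq lvl_count_loo). Qed.

End LeaveOneOut.

Lemma card_bh_lvl_gt0 l i : l i = 0%N :> nat -> (0 < #|bh_lvl l|)%N.
Proof. by move=> li0; apply/card_gt0P; exists i; rewrite bh_lvlE inE li0. Qed.

Lemma card_bh_lvl_le l : (#|bh_lvl l| <= m)%N.
Proof. by rewrite -[X in (_ <= X)%N]card_ord max_card. Qed.

Lemma fdp_term_loo (R : realType) l l' i :
  l' i = 0%N :> nat -> (forall j, j != i -> l' j = l j) ->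
  fdp_term R (bh_lvl l) i = ((l i <= #|bh_lvl l'|)%N)%:R / #|bh_lvl l'|%:R.
Proof.
move=> l'i0 l'E; rewrite /fdp_term (mem_bh_lvl_loo l'i0 l'E).
have [le_i|] := leqP; last by rewrite !mul0r.
rewrite (card_bh_lvl_loo l'i0 l'E) ?(mem_bh_lvl_loo l'i0 l'E) // max_r //.
by rewrite ler1n (card_bh_lvl_gt0 l'i0).
Qed.

End BHLevels.

Section ProductLaw.
Variables (R : realType) (m : nat).
Local Notation V := {ffun 'I_m -> 'I_m.+2}.
Implicit Types (pi : 'I_m -> 'I_m.+2 -> R) (l : V).

Definition upd l i a : V := [ffun j => if j == i then a else l j].

Lemma upd_id l i : upd l i (l i) = l.
Proof. by apply/ffunP => j; rewrite ffunE; case: eqVneq => [->|]. Qed.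

Lemma updK l i a b : upd (upd l i a) i b = upd l i b.
Proof. by apply/ffunP => j; rewrite !ffunE; case: eqVneq. Qed.

Lemma sum_prod_cond_at pi i (F : V -> R) :
  \sum_(l : V) (\prod_j pi j (l j)) * F l =
  \sum_(l : V | l i == ord0) (\prod_(j | j != i) pi j (l j)) * \sum_a pi i a * F (upd l i a).
Proof.
under [RHS]eq_bigr do rewrite big_distrr.
rewrite (partition_big (fun l : V => l i) xpredT) //= exchange_big /=.
apply: eq_bigr => a _.
rewrite (reindex_onto (fun l => upd l i a) (fun l => upd l i ord0)) /=; last first.
  by move=> l /eqP <-; rewrite updK upd_id.
apply: eq_big => [l|l _]; rewrite ?updK.
  rewrite ffunE !eqxx /=; apply/eqP/eqP => [<-|li0]; first by rewrite ffunE eqxx.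
  by rewrite -li0 upd_id.
rewrite (bigD1 i) //= ffunE eqxx mulrCA -mulrA; congr (_ * (_ * _)).
by apply: eq_bigr => j /negbTE ji; rewrite !ffunE ji.
Qed.

Lemma sum_prod_except_at pi i : (forall j, \sum_a pi j a = 1) ->
  \sum_(l : V | l i == ord0) \prod_(j | j != i) pi j (l j) = 1.
Proof.
move=> pi1; have := sum_prod_cond_at pi i (fun _ => 1).
under eq_bigr do rewrite mulr1.
under [in RHS]eq_bigr do rewrite (eq_bigr _ (fun _ _ => mulr1 _)) pi1 mulr1.
by rewrite -bigA_distr_bigA big1 // => j _; exact: pi1.
Qed.

Lemma expect_fdp_term_le pi i Q :
  (forall j a, 0 <= pi j a) -> (forall j, \sum_a pi j a = 1) ->
  (forall k, (0 < k <= m)%N -> \sum_(a < m.+2 | (a <= k)%N) pi i a <= Q * k%:R / m%:R) ->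
  \sum_(l : V) (\prod_j pi j (l j)) * fdp_term R (bh_lvl l) i <= Q / m%:R.
Proof.
move=> pi0 pi1 cdf.
rewrite (sum_prod_cond_at _ i).
apply: (@le_trans _ _
  (\sum_(l : V | l i == ord0) (\prod_(j | j != i) pi j (l j)) * (Q / m%:R))); last first.
  by rewrite -big_distrl /= sum_prod_except_at // mul1r.
apply: ler_sum => l /eqP li0; apply: ler_wpM2l; first exact: prodr_ge0.
set s := #|bh_lvl l|.
have s_gt0 : (0 < s)%N by apply: (card_bh_lvl_gt0 (i := i)); rewrite li0.
have term a : fdp_term R (bh_lvl (upd l i a)) i = ((a <= s)%N)%:R / s%:R.
  rewrite (fdp_term_loo R (l' := l)) ?ffunE ?eqxx ?li0 //.
  by move=> j /negbTE ji; rewrite ffunE ji.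
under eq_bigr do rewrite term.
have -> : \sum_a pi i a * (((a <= s)%N)%:R / s%:R) = (\sum_(a < m.+2 | (a <= s)%N) pi i a) / s%:R.
  rewrite big_distrl [RHS]big_mkcond /=; apply: eq_bigr => a _.
  by case: leqP => _; rewrite ?mul1r ?mul0r ?mulr0 // mulrC.
rewrite ler_pdivrMr ?ltr0n // -mulrAC; apply: cdf.
by rewrite s_gt0 card_bh_lvl_le.
Qed.

End ProductLaw.

Local Open Scope classical_set_scope.

Section Discretization.
Variables (R : realType) (m : nat).

(* The least [k <= m] with [e <= k/m], or [m + 1] if there is none. *)
Definition level (e : \bar R) : 'I_m.+2 :=
  inord (\max_(k < m.+1 | ~~ (e <= (k%:R / m%:R)%:E)%E) k.+1).

Lemma level_le e k : (k <= m)%N -> (level e <= k)%N = (e <= (k%:R / m%:R)%:E)%E.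
Proof.
move=> km; rewrite inordK; last by rewrite ltnS; apply/bigmax_leqP => l _; exact: ltn_ord.
apply/bigmax_leqP/idP => [le_k|le_e l].
  by apply/negPn/negP => /(le_k (Ordinal (km : (k < m.+1)%N))); rewrite ltnn.
rewrite ltnNge; apply: contra => le_lk; apply: le_trans le_e _.
by rewrite lee_fin ler_wpM2r ?invr_ge0 ?ler_nat.
Qed.

Lemma measurable_level_le d (T : measurableType d) (f : T -> \bar R) k :
  measurable_fun setT f -> measurable [set x | (level (f x) <= k)%N].
Proof.
move=> mf; have [km|mk] := leqP k m.
  have -> : [set x | (level (f x) <= k)%N] =
      setT `&` [set x | (f x <= cst (k%:R / m%:R)%:E x)%E].
    by apply/seteqP; split => x /=; rewrite level_le //; case.
  exact: measurable_lee.
suff -> : [set x | (level (f x) <= k)%N] = setT by [].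
by apply/seteqP; split => // x _; rewrite /= (leq_trans _ mk) // -ltnS.
Qed.

Lemma measurable_level_eq d (T : measurableType d) (f : T -> \bar R) a :
  measurable_fun setT f -> measurable [set x | level (f x) = a].
Proof.
move=> mf; have [a0|a_gt0] := posnP a.
  have -> : [set x | level (f x) = a] = [set x | (level (f x) <= 0)%N].
    apply/seteqP; split => x /=; first by move=> ->; rewrite a0.
    by rewrite leqn0 => /eqP la0; apply/val_inj; rewrite /= la0 a0.
  exact: measurable_level_le.
have -> : [set x | level (f x) = a] =
    [set x | (level (f x) <= a)%N] `\` [set x | (level (f x) <= a.-1)%N].
  apply/seteqP; split => x /=; first by move=> ->; split => //; lia.
  by case=> le_a /negP; rewrite -ltnNge prednK // => lt_a; apply/val_inj/eqP; rewrite eqn_leq le_a.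
by apply: measurableD; exact: measurable_level_le.
Qed.

End Discretization.

Lemma integral_fin_valued (R : realType) d (Omega : measurableType d)
  (mu : {measure set Omega -> \bar R}) (V : finType) (g : Omega -> V)
  (h : V -> \bar R) :
  (forall v, measurable (g @^-1` [set v])) -> (forall v, (0 <= h v)%E) ->
  (\int[mu]_w h (g w) = \sum_(v : V) h v * mu (g @^-1` [set v]))%E.
Proof.
move=> mg h0.
have -> : (fun w => h (g w)) = (fun w => \sum_(v : V) (cst (h v) \_ (g @^-1` [set v])) w)%E.
  apply/funext => w; rewrite (bigD1 (g w)) //= big1 ?adde0; first by rewrite patchE mem_set.
  by move=> v /eqP gwv; rewrite patchE memNset // => /esym.
rewrite ge0_integral_sum //.
- by apply: eq_bigr => v _; rewrite -integral_mkcond integral_cst.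
- by move=> v; apply/(measurable_restrictT _ _).1 => //; exact: measurable_cst.
- by move=> v w _; rewrite patchE; case: ifP => // _; exact: h0.
Qed.

Lemma measure_fin_preimage (R : realType) d (Omega : measurableType d)
  (mu : {measure set Omega -> \bar R}) (V : finType) (g : Omega -> V) (A : {pred V}) :
  (forall v, measurable (g @^-1` [set v])) ->
  mu [set w | g w \in A] = (\sum_(v in A) mu (g @^-1` [set v]))%E.
Proof.
move=> mg; have mA : measurable [set w | g w \in A].
  have -> : [set w | g w \in A] = \bigcup_(v in [set v | v \in A]) g @^-1` [set v].
    by apply/seteqP; split => [w gwA|w [v vA gwv]]; [exists (g w) | rewrite /= gwv].
  by apply: fin_bigcup_measurable => //; exact: finite_finset.
have := integral_fin_valued mu (h := fun v => ((v \in A) : bool)%:R%:E) mg.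
rewrite (eq_integral (fun w => (\1_[set w | g w \in A] w)%:E)); last first.
  move=> w _; rewrite indicE; have [gwA|gwA] := boolP (g w \in A); first by rewrite mem_set.
  by rewrite memNset //=; exact/negP.
rewrite integral_indic // setIT => ->; last by move=> v; rewrite lee_fin.
by rewrite [RHS]big_mkcond; apply: eq_bigr => v _; case: (v \in A); rewrite ?mul1e ?mul0e.
Qed.

(* The [0] keeps the supremum nonnegative when no [c] makes [H_{i,c}] true. *)
Definition null_weight (R : realType) (I : set R) (q : R -> R) (t : R) : \bar R :=
  ereal_sup ([set 0%E] `|` [set (q c)^-1%:E | c in [set c | I c /\ c <= t]]).

Lemma null_weight_ge0 (R : realType) (I : set R) q t : (0 <= null_weight I q t)%E.
Proof. by apply: ereal_sup_ubound; left. Qed.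

Lemma sup_fdp_le_null_weight (R : realType) m (theta : 'I_m -> R) I q S :
  (ereal_sup [set (fdp theta c S / q c)%:E | c in I] <=
   \sum_(i < m) null_weight I q (theta i) * (fdp_term R S i)%:E)%E.
Proof.
apply: ge_ereal_sup => _ [c Ic <-]; rewrite fdpE big_distrl /= -sumEFin.
apply: lee_sum => i _; have [ci|_] := boolP (c <= theta i); last first.
  by rewrite !mul0r mule_ge0 ?null_weight_ge0 // lee_fin fdp_term_ge0.
rewrite mul1r EFinM muleC; apply: lee_wpmul2r; first by rewrite lee_fin fdp_term_ge0.
by apply: ereal_sup_ubound; right; exists c.
Qed.

Lemma null_weight_mul_le (R : realType) (I : set R) q t (E M : R) :
  0 <= E -> 0 < M -> (forall c, I c -> c <= t -> 0 < q c /\ E <= q c / M) ->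
  (null_weight I q t * E%:E <= M^-1%:E)%E.
Proof.
move=> E_ge0 M_gt0 le_E; have [->|E_neq0] := eqVneq E 0.
  by rewrite mule0 lee_fin invr_ge0 ltW.
have E_gt0 : 0 < E by rewrite lt_def E_neq0 E_ge0.
suff le_w : (null_weight I q t <= (M * E)^-1%:E)%E.
  apply: le_trans (lee_wpmul2r _ le_w) _; first by rewrite lee_fin.
  by rewrite -EFinM invfM -mulrA mulVf ?mulr1 ?gt_eqF.
apply: ge_ereal_sup => _ [->|[c [Ic ct] <-]]; first by rewrite lee_fin invr_ge0 mulr_ge0 // ltW.
have [qc_gt0 le_Ec] := le_E c Ic ct.
by rewrite lee_fin lef_pV2 ?posrE ?mulr_gt0 // mulrC -ler_pdivlMr.
Qed.

Section RandomLevels.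
Variables (R : realType) (dO : measure_display) (Omega : measurableType dO)
  (P : probability Omega R) (m : nat) (d : 'I_m -> measure_display)
  (T : forall i, measurableType (d i)) (X : forall i, Omega -> T i)
  (p : forall i, T i -> R -> R) (I : set R) (q : R -> R).
Arguments p : clear implicits.
Hypotheses (hX : forall i, measurable_fun setT (X i))
  (hsupmeas : forall i, measurable_fun [set: T i] (Psup I q (p i) : T i -> \bar R)).
Arguments hX : clear implicits.
Arguments hsupmeas : clear implicits.
Local Notation V := {ffun 'I_m -> 'I_m.+2}.

Definition levels (w : Omega) : V := [ffun j => level m (Psup I q (p j) (X j w))].
Definition law j a : R := fine (P [set w | levels w j = a]).

Lemma levels_coordE j a :
  [set w | levels w j = a] = X j @^-1` [set x | level m (Psup I q (p j) x) = a].
Proof. by apply/seteqP; split => w; rewrite /= ffunE. Qed.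

Lemma measurable_levels_coord j a : measurable [set w | levels w j = a].
Proof.
rewrite levels_coordE -[X in measurable X]setTI.
by apply: hX => //; exact: measurable_level_eq (hsupmeas j).
Qed.

Lemma levels_preimage (l : V) :
  levels @^-1` [set l] = \bigcap_(j in [set: 'I_m]) [set w | levels w j = l j].
Proof.
apply/seteqP; split => w /=; first by move=> <-.
by move=> coord; apply/ffunP => j; exact: coord.
Qed.

Lemma measurable_levels (l : V) : measurable (levels @^-1` [set l]).
Proof.
rewrite levels_preimage; apply: fin_bigcap_measurable; first exact: finite_finset.
by move=> j _; exact: measurable_levels_coord.
Qed.

Lemma lawE j a : P [set w | levels w j = a] = (law j a)%:E.
Proof.
rewrite /law fineK // ge0_fin_numE ?measure_ge0 //.
exact: le_lt_trans (probability_le1 P (measurable_levels_coord j a)) (ltey _).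
Qed.

Lemma law_ge0 j a : 0 <= law j a.
Proof. by rewrite /law fine_ge0 // measure_ge0. Qed.

Lemma prod_law_ge0 (l : V) : 0 <= \prod_j law j (l j).
Proof. by rewrite prodr_ge0 // => j _; exact: law_ge0. Qed.

Lemma sum_lawE j (A : {pred 'I_m.+2}) :
  (\sum_(a in A) law j a)%:E = P [set w | levels w j \in A].
Proof.
rewrite (@measure_fin_preimage _ _ _ P _ (fun w => levels w j)) -?sumEFin.
  by apply: eq_bigr => a _; rewrite -lawE.
exact: measurable_levels_coord.
Qed.

Lemma law_sum1 j : \sum_a law j a = 1.
Proof.
apply: EFin_inj; rewrite (sum_lawE j predT) -(probability_setT P).
by congr (P _); apply/seteqP.
Qed.

Lemma prob_levels (hindep : mutually_independent P X) (l : V) :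
  P (levels @^-1` [set l]) = (\prod_j law j (l j))%:E.
Proof.
rewrite levels_preimage.
under eq_bigcapr do rewrite levels_coordE.
rewrite hindep -?prodEFin; last by move=> j; exact: measurable_level_eq (hsupmeas j).
by apply: eq_bigr => j _; rewrite -lawE levels_coordE.
Qed.

Lemma measurable_levels_le j k : measurable [set w | (levels w j <= k)%N].
Proof.
have -> : [set w | (levels w j <= k)%N] =
    setT `&` X j @^-1` [set x | (level m (Psup I q (p j) x) <= k)%N].
  by apply/seteqP; split => w /=; rewrite ffunE //; case.
by apply: hX => //; exact: measurable_level_le (hsupmeas j).
Qed.

Lemma law_cdf_le i c : I c -> 0 < q c -> measurable_fun setT (fun x => p i x c) ->
  (forall u, 0 <= u <= 1 -> (P [set w | (p i (X i w) c <= u)%R] <= u%:E)%E) ->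
  forall k, (0 < k <= m)%N -> \sum_(a < m.+2 | (a <= k)%N) law i a <= q c * k%:R / m%:R.
Proof.
move=> Ic qc_gt0 mp valid k /andP[k_gt0 km]; set u := q c * k%:R / m%:R.
have mU : measurable [set w | p i (X i w) c <= u].
  have -> : [set w | p i (X i w) c <= u] = setT `&` (fun w => p i (X i w) c) @^-1` `]-oo, u].
    by apply/seteqP; split => w /=; rewrite in_itv //=; case.
  by apply: (measurableT_comp mp (hX i)) => //; exact: measurable_itv.
rewrite -lee_fin (sum_lawE i [pred a : 'I_m.+2 | (a <= k)%N]).
apply: (@le_trans _ _ (P [set w | p i (X i w) c <= u])).
  apply: le_measure; rewrite ?inE //; first exact: measurable_levels_le.
  move=> w /=; rewrite inE ffunE level_le // => le_sup.
  have le_c : ((p i (X i w) c / q c)%:E <= Psup I q (p i) (X i w))%E.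
    by apply: ereal_sup_ubound; exists c.
  by have := le_trans le_c le_sup; rewrite lee_fin ler_pdivrMr // mulrC mulrA.
have [le_u1|lt_1u] := leP u 1.
  by apply: valid; rewrite le_u1 andbT divr_ge0 // mulr_ge0 // ltW.
by apply: le_trans (probability_le1 P mU) _; rewrite lee_fin ltW.
Qed.

Lemma bh_output_levels w :
  bh_output (fun i => Psup I q (p i) (X i w)) = bh_lvl (levels w).
Proof.
apply: eq_iter => S; apply/finset.setP => j; rewrite !inE ffunE level_le //.
by rewrite -[X in (_ <= X)%N]card_ord max_card.
Qed.

Lemma integral_bh_output (h : {set 'I_m} -> \bar R) : (forall S, 0 <= h S)%E ->
  (\int[P]_w h (bh_output (fun i => Psup I q (p i) (X i w))) =
   \sum_(l : V) h (bh_lvl l) * P (levels @^-1` [set l]))%E.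
Proof.
move=> h_ge0; under eq_integral => w _ do rewrite bh_output_levels.
exact: (integral_fin_valued P (g := levels) (h := fun l => h (bh_lvl l))) measurable_levels _.
Qed.

Local Notation ST w := (bh_output (fun i => Psup I q (p i) (X i w))).

Section Fdp.
Variables (theta : 'I_m -> R) (hq : forall c, I c -> 0 < q c).

Lemma sup_fdp_ratio_ge0 c S : I c ->
  (0 <= ereal_sup [set (fdp theta c' S / q c')%:E | c' in I])%E.
Proof.
move=> Ic; apply: le_trans (ereal_sup_ubound _) => /=; last by exists c.
by rewrite lee_fin divr_ge0 ?fdp_ge0 // ltW // hq.
Qed.

Lemma sup_fdr_le_expect_sup :
  (ereal_sup [set (\int[P]_w (fdp theta c (ST w))%:E) * (q c)^-1%:E | c in I] <=
   \int[P]_w ereal_sup [set (fdp theta c (ST w) / q c)%:E | c in I])%E.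
Proof.
apply: ge_ereal_sup => _ [c Ic <-].
rewrite (integral_bh_output (h := fun S => (fdp theta c S)%:E)) => [|S]; last first.
  by rewrite lee_fin fdp_ge0.
rewrite (integral_bh_output (h := fun S => ereal_sup [set (fdp theta c' S / q c')%:E | c' in I])).
  rewrite ge0_sume_distrl => [|l _]; last by rewrite mule_ge0 ?measure_ge0 // lee_fin fdp_ge0.
  apply: lee_sum => l _; rewrite muleAC -EFinM; apply: lee_wpmul2r; first exact: measure_ge0.
  by apply: ereal_sup_ubound; exists c.
by move=> S; exact: sup_fdp_ratio_ge0 Ic.
Qed.

Lemma expect_fdp_term_le_valid i c : I c ->
  measurable_fun setT (fun x => p i x c) ->
  (forall u, 0 <= u <= 1 -> (P [set w | (p i (X i w) c <= u)%R] <= u%:E)%E) ->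
  \sum_(l : V) (\prod_j law j (l j)) * fdp_term R (bh_lvl l) i <= q c / m%:R.
Proof.
move=> Ic mp valid; apply: expect_fdp_term_le law_ge0 law_sum1 _.
exact: law_cdf_le Ic (hq Ic) mp valid.
Qed.

Lemma expect_sup_fdp_le_null_weight c0 : I c0 -> mutually_independent P X ->
  (\int[P]_w ereal_sup [set (fdp theta c (ST w) / q c)%:E | c in I] <=
   \sum_(i < m) null_weight I q (theta i) *
     (\sum_(l : V) (\prod_j law j (l j)) * fdp_term R (bh_lvl l) i)%:E)%E.
Proof.
move=> Ic0 hindep.
rewrite (integral_bh_output
  (h := fun S => ereal_sup [set (fdp theta c S / q c)%:E | c in I])); last first.
  by move=> S; exact: sup_fdp_ratio_ge0 Ic0.
apply: (@le_trans _ _ (\sum_(l : V) (\sum_i null_weight I q (theta i) *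
    (fdp_term R (bh_lvl l) i)%:E) * P (levels @^-1` [set l]))%E).
  apply: lee_sum => l _; apply: lee_wpmul2r; [exact: measure_ge0 | exact: sup_fdp_le_null_weight].
under eq_bigr => l _.
  rewrite ge0_sume_distrl => [|i _]; last first.
    by rewrite mule_ge0 ?null_weight_ge0 // lee_fin fdp_term_ge0.
over.
rewrite exchange_big /=; apply: lee_sum => i _; rewrite -sumEFin ge0_sume_distrr.
  by apply: lee_sum => l _; rewrite -muleA (prob_levels hindep) -EFinM mulrC lexx.
by move=> l _; rewrite lee_fin mulr_ge0 ?fdp_term_ge0 ?prod_law_ge0.
Qed.

Lemma expect_sup_fdp_le1 :
  (forall i c, I c -> measurable_fun setT (fun x => p i x c)) ->
  mutually_independent P X ->
  (forall i c, I c -> c <= theta i -> forall u : R, 0 <= u <= 1 ->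
     (P [set w | (p i (X i w) c <= u)%R] <= u%:E)%E) ->
  (\int[P]_w ereal_sup [set (fdp theta c (ST w) / q c)%:E | c in I] <= 1)%E.
Proof.
move=> hpmeas hindep hvalid.
have [[c0 Ic0]|noI] := pselect (exists c, I c); last first.
  have -> : I = set0 by apply/seteqP; split => // c Ic; apply: noI; exists c.
  under eq_integral do rewrite image_set0 ereal_sup0.
  rewrite integral_cst // gt0_mulNye ?leNye //.
  by have P1 : P setT = 1%E := probability_setT P; have := @lte01 R; rewrite -P1.
apply: le_trans (expect_sup_fdp_le_null_weight Ic0 hindep) _.
apply: (@le_trans _ _ (\sum_(i < m) (m%:R^-1)%:E)%E).
  apply: lee_sum => i _; apply: null_weight_mul_le.
  - by rewrite sumr_ge0 // => l _; rewrite mulr_ge0 ?fdp_term_ge0 ?prod_law_ge0.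
  - by rewrite ltr0n (leq_ltn_trans _ (ltn_ord i)).
  - move=> c Ic ci; split; first exact: hq.
    exact: expect_fdp_term_le_valid Ic (hpmeas i c Ic) (hvalid i c Ic ci).
rewrite sumEFin sumr_const card_ord lee_fin.
have [->|m_gt0] := posnP m; first by rewrite mulr0n.
by rewrite -(mulr_natr m%:R^-1) mulVf // pnatr_eq0 -lt0n.
Qed.

End Fdp.

End RandomLevels.

Theorem proposition3 (R : realType) (dO : measure_display)
  (Omega : measurableType dO) (P : probability Omega R) (m : nat)
  (d : 'I_m -> measure_display) (T : forall i, measurableType (d i))
  (X : forall i, Omega -> T i) (p : forall i, T i -> R -> R)
  (theta : 'I_m -> R) (I : set R) (q : R -> R)
  (hq : forall c, I c -> 0 < q c)
  (hX : forall i, measurable_fun setT (X i))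
  (hp01 : forall i x c, I c -> 0 <= p i x c <= 1)
  (hpmeas : forall i c, I c -> measurable_fun setT (fun x => p i x c))
  (hsupmeas : forall i, measurable_fun [set: T i] (Psup I q (p i) : T i -> \bar R))
  (hindep : mutually_independent P X)
  (hvalid : forall i c, I c -> c <= theta i ->
     forall u : R, 0 <= u <= 1 ->
       (P [set w | (p i (X i w) c <= u)%R] <= u%:E)%E) :
  let ST := fun w => bh_output (fun i => Psup I q (p i) (X i w)) in
  (ereal_sup [set ((\int[P]_w (fdp theta c (ST w))%:E) * (q c)^-1%:E)%E | c in I]
     <= \int[P]_w ereal_sup [set ((fdp theta c (ST w)) / q c)%:E | c in I])%E /\
  (\int[P]_w ereal_sup [set ((fdp theta c (ST w)) / q c)%:E | c in I] <= 1)%E.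
Proof.
move=> ST; split.
  exact (sup_fdr_le_expect_sup P hX hsupmeas theta hq).
exact (expect_sup_fdp_le1 hX hsupmeas hq hpmeas hindep hvalid).
Qed.
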